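(* The elements $y_1+y_2+x_3$ and $y_1+y_2+y_3$ are perfect in $D^{2,2,2}$.
   Context: $D^{2,2,2}$ is the modular lattice generated by $x_1,y_1,x_2,y_2,x_3,y_3$ subject only to $x_i\subseteq y_i$ ($i=1,2,3$), with a greatest element $I$ adjoined. Join is written $a+b$. A representation $\rho$ of $D^{2,2,2}$ in a finite-dimensional vector space $X$ is a lattice morphism from $D^{2,2,2}$ to the subspace lattice of $X$, with $\rho(I)=X$. It is indecomposable if $X\neq0$ and there is no decomposition $X=X'\oplus X''$ with $X',X''\neq0$ and $\rho(a)=(\rho(a)\cap X')+(\rho(a)\cap X'')$ for all $a$. An element $a$ is perfect if $\rho(a)\in\{0,X\}$ for every indecomposable representation $\rho$ in a space $X$. *)

From HB Require Import structures.
From mathcomp Require Import all_boot all_order all_algebra.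
Set Implicit Arguments. Unset Strict Implicit. Unset Printing Implicit Defensive.
Import GRing.Theory.
Local Open Scope ring_scope.

Inductive idx := i1 | i2 | i3.

(* Lattice terms over the generators x_1,y_1,x_2,y_2,x_3,y_3 and the adjoined
   greatest element I.  Every element of D^{2,2,2} is the value of such a term. *)
Inductive lterm :=
  | Gx of idx
  | Gy of idx
  | Top
  | Join of lterm & lterm
  | Meet of lterm & lterm.

Declare Scope lterm_scope.
Notation "a \+ b" := (Join a b) (at level 50, left associativity) : lterm_scope.
Delimit Scope lterm_scope with LT.

(* A representation of D^{2,2,2} in X (= the vectType vT) is given by subspaces
   X_i = rho(x_i), Y_i = rho(y_i) with X_i <= Y_i; rho is then the unique lattice
   morphism extending them (D^{2,2,2} is the free modular lattice on these
   generators subject to x_i <= y_i) with rho(I) = X.  [eval] computes rho. *)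
Section Eval.
Variables (K : fieldType) (vT : vectType K).
Variables (Xs Ys : idx -> {vspace vT}).

Fixpoint eval (t : lterm) : {vspace vT} :=
  match t with
  | Gx i => Xs i
  | Gy i => Ys i
  | Top => fullv
  | Join a b => (eval a + eval b)%VS
  | Meet a b => (eval a :&: eval b)%VS
  end.

Definition is_rep : Prop := forall i, (Xs i <= Ys i)%VS.

Definition indecomposable : Prop :=
  (fullv : {vspace vT}) != 0%VS /\
  ~ (exists X1 X2 : {vspace vT},
        [/\ X1 != 0%VS, X2 != 0%VS, directv (X1 + X2), (X1 + X2)%VS = fullv &
            forall t : lterm, eval t = (eval t :&: X1 + eval t :&: X2)%VS]).
End Eval.

Definition perfect (K : fieldType) (a : lterm) : Prop :=
  forall (vT : vectType K) (Xs Ys : idx -> {vspace vT}),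
    is_rep Xs Ys -> indecomposable Xs Ys ->
    eval Xs Ys a = 0%VS \/ eval Xs Ys a = fullv.

(* If a subspace S contains all the Y_i but Y_j, and also X_j, then every
   generator is split by a decomposition X = S (+) T as soon as T is a complement
   of S adapted to Y_j, i.e. with Y_j = (Y_j /\ S) + (Y_j /\ T); such a T exists
   for any subspace.  Splitting is preserved by sums and, the decomposition being
   direct, by intersections, so it holds for all of rho; indecomposability then
   forces S = 0 or T = 0.  Both y_1 + y_2 + x_3 and y_1 + y_2 + y_3 are such S. *)
From HB Require Import structures.
From mathcomp Require Import all_boot all_order all_algebra.
Set Implicit Arguments. Unset Strict Implicit. Unset Printing Implicit Defensive.
Import GRing.Theory.
Local Open Scope ring_scope.

Section Splitting.
Variables (K : fieldType) (vT : vectType K).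
Implicit Types S T U V : {vspace vT}.

Definition vsplits S T V := V = (V :&: S + V :&: T)%VS.

Lemma vsplits_add S T U V :
  vsplits S T U -> vsplits S T V -> vsplits S T (U + V).
Proof.
rewrite /vsplits => sU sV; apply/eqP; rewrite eqEsubv andbC subv_add !capvSl /=.
rewrite subv_add; apply/andP; split; [rewrite {1}sU | rewrite {1}sV];
  by apply: addvS; apply: capvS; rewrite ?addvSl ?addvSr.
Qed.

Lemma vsplits_cap S T U V : directv (S + T) ->
  vsplits S T U -> vsplits S T V -> vsplits S T (U :&: V).
Proof.
move=> /directv_add_unique dxST sU sV; apply/eqP.
rewrite eqEsubv andbC subv_add !capvSl /=; apply/subvP => w /memv_capP[].
rewrite {1}sU {1}sV => /memv_addP[u1 Su1 [u2 Tu2 ->]] /memv_addP[v1 Sv1 [v2 Tv2]].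
move: Su1 Tu2 Sv1 Tv2; rewrite !memv_cap => /andP[Uu1 Su1] /andP[Uu2 Tu2].
move=> /andP[Vv1 Sv1] /andP[Vv2 Tv2] /eqP; rewrite dxST // => /eqP[eu1 eu2].
rewrite {}eu1 {}eu2 in Uu1 Uu2 Su1 Tu2 *.
by apply: memv_add; rewrite !memv_cap ?Uu1 ?Vv1 ?Su1 ?Uu2 ?Vv2 ?Tu2.
Qed.

Lemma vsplits_subl S T V : (V <= S)%VS -> vsplits S T V.
Proof.
move=> sVS; rewrite /vsplits (capv_idPl sVS).
by apply/eqP; rewrite eqEsubv addvSl subv_add subvv capvSl.
Qed.

Lemma exists_splitting_compl S Y :
  exists T, [/\ directv (S + T), (S + T)%VS = fullv & vsplits S T Y].
Proof.
exists (Y :\: S + (S + Y)^C)%VS.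
have dimSY : \dim (S + Y) = (\dim S + \dim (Y :\: S))%N.
  by rewrite addvC -addv_diff dimv_disjoint_sum ?capv_diff // addnC.
have fullST : (S + (Y :\: S + (S + Y)^C))%VS = fullv.
  by rewrite addvA [(S + _)%VS]addvC addv_diff [(Y + S)%VS]addvC addv_complf.
split=> //.
- rewrite directvEgeq /= fullST -(addv_complf (S + Y)).
  rewrite (dimv_disjoint_sum (capv_compl _)) dimSY -addnA leq_add2l.
  exact: (dimv_add_leqif _ _).1.
- apply/eqP; rewrite eqEsubv andbC subv_add !capvSl /=.
  rewrite -{1}(addv_diff_cap Y S) addvC capvC.
  by apply: addvS; rewrite // subv_cap diffvSl addvSl.
Qed.

Variables (Xs Ys : idx -> {vspace vT}).

Lemma eval_vsplits S T : directv (S + T) -> (S + T)%VS = fullv ->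
  (forall i, vsplits S T (Xs i)) -> (forall i, vsplits S T (Ys i)) ->
  forall t, vsplits S T (eval Xs Ys t).
Proof.
move=> dxST defST sX sY; elim=> //= [|a sa b sb|a sa b sb].
- by rewrite /vsplits !(capv_idPr (subvf _)).
- exact: vsplits_add.
- exact: vsplits_cap.
Qed.

Lemma indecomposable_supv_gens S j : is_rep Xs Ys -> indecomposable Xs Ys ->
  (forall i, i = j \/ (Ys i <= S)%VS) -> (Xs j <= S)%VS ->
  S = 0%VS \/ S = fullv.
Proof.
move=> repXY [_ indec] sYS sXjS.
have [T [dxST defST sYj]] := exists_splitting_compl S (Ys j).
have [->|S0] := eqVneq S 0%VS; first by left.
have [T0|T0] := eqVneq T 0%VS; first by right; rewrite -defST T0 addv0.
case: indec; exists S, T; split=> //; apply: eval_vsplits => // i.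
- by apply: vsplits_subl; case: (sYS i) => [->|/(subv_trans (repXY i))].
- by case: (sYS i) => [->|/vsplits_subl].
Qed.

End Splitting.

Theorem mainTheorem13 (K : fieldType) :
  perfect K (Gy i1 \+ Gy i2 \+ Gx i3)%LT /\ perfect K (Gy i1 \+ Gy i2 \+ Gy i3)%LT.
Proof.
have sub_sum3l (vT : vectType K) (U1 U2 U3 : {vspace vT}) : (U1 <= U1 + U2 + U3)%VS.
  exact: subv_trans (addvSl _ _) (addvSl _ _).
have sub_sum3m (vT : vectType K) (U1 U2 U3 : {vspace vT}) : (U2 <= U1 + U2 + U3)%VS.
  exact: subv_trans (addvSr _ _) (addvSl _ _).
split=> vT Xs Ys repXY indec; apply: (indecomposable_supv_gens (j := i3)) => //=.
- by case; [right | right | left].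
- exact: addvSr.
- by case; right; rewrite ?addvSr.
- exact: subv_trans (repXY i3) (addvSr _ _).
Qed.
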